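(* For every probability distribution on inputs of length $n$, every $p\in[0,1]$ and every $k\ge1$, there is a deterministic algorithm for Locate (which may depend on the distribution) that runs in $k$ rounds, asks at most $k\lceil pn\rceil^{1/k}$ queries, and succeeds with probability at least $p$ when the input is drawn from that distribution.
   Context: Locate problem in the rank query model: there is a vector $\vec{x}=(x_1,\ldots,x_n)$ whose ranks form a permutation of $\{1,\ldots,n\}$; an index $i$ is given and the goal is to output $\mathrm{rank}(x_i)$. Queries have the form ''How is $\mathrm{rank}(x_j)$ compared to $m$?'', with answer ''$<$'', ''$=$'' or ''$>$''. An algorithm runs in $k$ rounds if in each of $k$ rounds it submits a set of queries chosen depending only on answers of earlier rounds, then receives all answers. An input distribution is a distribution over rank permutations. *)

From HB Require Import structures.
From mathcomp Require Import all_boot all_order all_algebra all_fingroup.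
From mathcomp Require Import all_classical all_reals all_analysis.
Set Implicit Arguments.
Unset Strict Implicit.
Unset Printing Implicit Defensive.
Import Order.TTheory GRing.Theory Num.Theory.

(* Rank query model.  An input of length n is a rank permutation
   s : 'S_n ; rank(x_j) := (s j).+1 \in {1,..,n}. *)
Definition rank n (s : 'S_n) (j : 'I_n) : nat := (s j).+1.

Definition query n := ('I_n * nat)%type.
Definition answer n (s : 'S_n) (q : query n) : comparison :=
  Nat.compare (rank s q.1) q.2.

Definition transcript n := seq (seq (query n * comparison)).

(* A deterministic adaptive algorithm: the query set of round r is a function
   of (r and) the answers of the earlier rounds (the transcript), and the output
   is a function of the final transcript. *)
Record algo n := Algo {
  queries_of : nat -> transcript n -> seq (query n);
  output_of : transcript n -> nat }.

Fixpoint run n (A : algo n) (s : 'S_n) (r : nat) : transcript n :=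
  match r with
  | 0 => [::]
  | r'.+1 => let t := run A s r' in
             rcons t [seq (q, answer s q) | q <- queries_of A r' t]
  end.

Definition result n (A : algo n) (k : nat) (s : 'S_n) : nat :=
  output_of A (run A s k).

Definition num_queries n (A : algo n) (k : nat) (s : 'S_n) : nat :=
  sumn [seq size rd | rd <- run A s k].

(* Let m = ceil(p n) and let S be the m values that rank(x_i) takes with the
   largest probabilities; they carry probability at least m / n >= p.  Pick b
   with b^k <= m < (b+1)^k and list the ranks in S increasingly, padded beyond
   n.  A (b+1)-ary search for the position of rank(x_i) in this list learns one
   base-(b+1) digit per round from b queries, so after k rounds it knows the
   position whenever rank(x_i) lies in S, having asked k b <= k m^(1/k)
   queries. *)
From HB Require Import structures.
From mathcomp Require Import all_boot all_order all_algebra all_fingroup.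
From mathcomp Require Import all_classical all_reals all_analysis.
From mathcomp Require Import zify.
Import Order.TTheory GRing.Theory Num.Theory.
Set Implicit Arguments.
Unset Strict Implicit.
Unset Printing Implicit Defensive.

Definition ge_answer (c : comparison) : bool := if c is Lt then false else true.

Lemma ge_answer_compare (a c : nat) : ge_answer (Nat.compare a c) = (c <= a).
Proof.
case: (PeanoNat.Nat.compare_spec a c) => [->|/ssrnat.ltP lt|/ssrnat.ltP lt] /=.
- by rewrite leqnn.
- by rewrite leqNgt lt.
- by rewrite ltnW.
Qed.

Lemma count_leq_iota c b : count (fun j => j <= c) (iota 1 b) = minn c b.
Proof.
elim: b => [|b IHb]; first by rewrite minn0.
rewrite -[b.+1]addn1 iotaD count_cat IHb /= add1n; lia.
Qed.

Lemma exists_iroot m k : 0 < k -> exists b, b ^ k <= m < b.+1 ^ k.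
Proof.
move=> k_gt0; elim: m => [|m [b /andP[le_bm lt_mb]]].
  by exists 0; rewrite exp0n // expn_gt0.
have [lt_m1b | le_bm1] := ltnP m.+1 (b.+1 ^ k).
  by exists b; rewrite lt_m1b andbT; lia.
exists b.+1; have : b.+1 ^ k < b.+2 ^ k by rewrite ltn_exp2r.
lia.
Qed.

(* After r rounds the transcript spells, in base b.+1, the leading r of the k
   digits of the position t0 with rank(x_i) = g t0; round r queries g at the b
   points cutting the current block of positions into b.+1 equal parts. *)
Section Search.

Variables (n : nat) (i : 'I_n) (g : nat -> nat) (b k : nat).

Definition round_digit (rd : seq (query n * comparison)) : nat :=
  count (fun qa => ge_answer qa.2) rd.

Definition transcript_value (t : transcript n) : nat :=
  foldl (fun acc rd => acc * b.+1 + round_digit rd) 0 t.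

Lemma transcript_value_rcons t rd :
  transcript_value (rcons t rd) = transcript_value t * b.+1 + round_digit rd.
Proof. by rewrite /transcript_value foldl_rcons. Qed.

Definition search_queries (r : nat) (t : transcript n) : seq (query n) :=
  [seq (i, g (transcript_value t * b.+1 ^ (k - r) + j * b.+1 ^ (k - r.+1)))
  | j <- iota 1 b].

Definition search_algo : algo n :=
  Algo search_queries (fun t => g (transcript_value t)).

Lemma num_queries_search_algo r s : num_queries search_algo r s = r * b.
Proof.
elim: r => [|r IHr] //; rewrite /num_queries /= map_rcons sumn_rcons.
by rewrite -/(num_queries _ _ _) IHr !size_map size_iota mulSn addnC.
Qed.

Hypothesis g_mono : {homo g : u v / u < v}.

Lemma count_search_answers t w :
  0 < w ->
  count (fun j => g ((t %/ (b.+1 * w)) * (b.+1 * w) + j * w) <= g t) (iota 1 b)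
  = (t %% (b.+1 * w)) %/ w.
Proof.
move=> w_gt0.
rewrite (eq_count (a2 := fun j => j <= (t %% (b.+1 * w)) %/ w)); last first.
  move=> j /=; rewrite (leq_mono g_mono).
  by rewrite {2}(divn_eq t (b.+1 * w)) leq_add2l leq_divRL.
rewrite count_leq_iota (minn_idPl _) // -ltnS ltn_divLR // mulnC ltn_pmod //.
by rewrite muln_gt0 w_gt0.
Qed.

Lemma transcript_value_run s t0 r :
  t0 < b.+1 ^ k -> rank s i = g t0 -> r <= k ->
  transcript_value (run search_algo s r) = t0 %/ b.+1 ^ (k - r).
Proof.
move=> lt_t0 rank_si; elim: r => [|r IHr] le_rk.
  by rewrite subn0 divn_small.
rewrite /= transcript_value_rcons /round_digit count_map /search_queries.
rewrite count_map IHr; last exact: ltnW.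
set w := b.+1 ^ (k - r.+1).
have -> : b.+1 ^ (k - r) = b.+1 * w by rewrite -expnS; congr (_ ^ _); lia.
rewrite (eq_count (a2 := fun j =>
   g (t0 %/ (b.+1 * w) * (b.+1 * w) + j * w) <= g t0)); last first.
  by move=> j; rewrite /= /answer ge_answer_compare rank_si.
rewrite count_search_answers ?expn_gt0 //.
by rewrite -modn_divl [b.+1 * w]mulnC divnMA -divn_eq.
Qed.

Lemma search_algo_correct s t0 :
  t0 < b.+1 ^ k -> rank s i = g t0 -> result search_algo k s = rank s i.
Proof.
move=> lt_t0 rank_si.
rewrite /result /= (transcript_value_run lt_t0 rank_si) //.
by rewrite subnn divn1 rank_si.
Qed.

End Search.

Lemma padded_nth_homo (L : seq nat) n :
  sorted ltn L -> all (fun x => x <= n) L ->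
  {homo (fun u => nth (n + u) L u) : u v / u < v}.
Proof.
move=> sorted_L le_L_n u v lt_uv /=.
have [lt_vL | le_Lv] := ltnP v (size L).
  have lt_uL := ltn_trans lt_uv lt_vL.
  rewrite !(set_nth_default 0) //.
  exact: (sorted_ltn_nth ltn_trans).
rewrite [nth _ _ v]nth_default //.
have [lt_uL | le_Lu] := ltnP u (size L).
  2: by rewrite nth_default // ltn_add2l.
have /= := allP le_L_n _ (mem_nth (n + u) lt_uL); lia.
Qed.

Definition sorted_ranks n (S : {set 'I_n}) : seq nat :=
  sort leq [seq (val v).+1 | v <- enum S].

Lemma sorted_ranks_ltn n (S : {set 'I_n}) : sorted ltn (sorted_ranks S).
Proof.
rewrite ltn_sorted_uniq_leq sort_uniq sort_sorted ?andbT; last exact: leq_total.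
by rewrite map_inj_uniq ?enum_uniq // => x y [] /val_inj.
Qed.

Lemma sorted_ranks_le n (S : {set 'I_n}) :
  all (fun x => x <= n) (sorted_ranks S).
Proof.
by apply/allP => x; rewrite mem_sort => /mapP[v _ ->]; exact: ltn_ord.
Qed.

Lemma size_sorted_ranks n (S : {set 'I_n}) : size (sorted_ranks S) = #|S|.
Proof. by rewrite size_sort size_map -cardE. Qed.

Definition locate_algo n (i : 'I_n) (S : {set 'I_n}) (b k : nat) : algo n :=
  search_algo i (fun u => nth (n + u) (sorted_ranks S) u) b k.

Lemma locate_algo_correct n (i : 'I_n) (S : {set 'I_n}) b k (s : 'S_n) :
  #|S| < b.+1 ^ k -> s i \in S -> result (locate_algo i S b k) k s = rank s i.
Proof.
move=> lt_S_bk si_S; set L := sorted_ranks S.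
have rank_L : rank s i \in L.
  by rewrite mem_sort; apply: map_f; rewrite mem_enum.
have g_mono := padded_nth_homo (sorted_ranks_ltn S) (sorted_ranks_le S).
apply: (search_algo_correct g_mono (t0 := index (rank s i) L)).
- by rewrite (leq_trans _ lt_S_bk) // -size_sorted_ranks -/L ltnS index_size.
- by rewrite nth_index.
Qed.

Local Open Scope ring_scope.

Section HeavySubset.

Variables (R : realDomainType) (T : finType) (q : T -> R).

Lemma dominating_subset_sum (S : {set T}) :
  (forall x y, x \in S -> y \notin S -> q y <= q x) ->
  #|S|%:R * \sum_x q x <= #|T|%:R * \sum_(x in S) q x.
Proof.
move=> dominates.
have exchange :
    (\sum_(y in ~: S) q y) *+ #|S| <= (\sum_(x in S) q x) *+ #|~: S|.
  rewrite -sumr_const -sumrMnl; apply: ler_sum => x xS.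
  rewrite -sumr_const; apply: ler_sum => y; rewrite inE; exact: dominates.
rewrite (bigID (mem S)) /= -(cardsC S) natrD.
have -> : \sum_(y | y \notin S) q y = \sum_(y in ~: S) q y.
  by apply: eq_bigl => y; rewrite inE.
rewrite -[_ *+ #|S|]mulr_natr -[_ *+ #|~: S|]mulr_natr in exchange.
by rewrite mulrDr mulrDl lerD2l mulrC [X in _ <= X]mulrC.
Qed.

Lemma exists_heavy_subset m : (m <= #|T|)%N ->
  exists S : {set T}, #|S| = m /\
    m%:R * \sum_x q x <= #|T|%:R * \sum_(x in S) q x.
Proof.
move=> /card_geqP[s [uniq_s size_s _]].
have card_s : #|[set x in s]| = m by rewrite cardsE (card_uniqP uniq_s).
pose weight (S : {set T}) := \sum_(x in S) q x.
have [S /eqP card_S S_max] := @arg_maxP _ _ _ [set x in s]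
  (fun S : {set T} => #|S| == m) weight (introT eqP card_s).
exists S; split => //; rewrite -card_S.
apply: dominating_subset_sum => x y xS yS.
have yS' : y \notin S :\ x by rewrite !inE negb_and yS orbT.
have := S_max (y |: (S :\ x)).
rewrite /weight big_setU1 //= (big_setD1 x xS) /= lerD2r; apply.
by rewrite cardsU1 yS' -card_S (cardsD1 x S) xS.
Qed.

End HeavySubset.

Lemma sum_fibers_in (R : nmodType) (T I : finType) (f : T -> I) (F : T -> R)
    (A : {pred I}) :
  \sum_(v in A) \sum_(x | f x == v) F x = \sum_(x | f x \in A) F x.
Proof.
rewrite (partition_big f (mem A)) //=; apply: eq_bigr => v vA.
by apply: eq_bigl => x; case: eqP => [->|]; rewrite ?andbT ?andbF ?vA.
Qed.

Lemma ler_sum_subpred (R : numDomainType) (I : finType) (P Q : pred I)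
    (F : I -> R) :
  (forall x, P x -> Q x) -> (forall x, 0 <= F x) ->
  \sum_(x | P x) F x <= \sum_(x | Q x) F x.
Proof.
move=> PQ F_ge0; rewrite big_mkcond [X in _ <= X]big_mkcond /=.
by apply: ler_sum => x _; case: ifP => [/PQ ->|_] //; case: ifP.
Qed.

Lemma ceil_mulr_nat (R : archiRealFieldType) (p : R) n : 0 <= p <= 1 ->
  exists m : nat,
    [/\ Num.ceil (p * n%:R) = m%:Z, p * n%:R <= m%:R & (m <= n)%N].
Proof.
move=> /andP[p_ge0 p_le1]; set z := Num.ceil (p * n%:R).
have z_nat : z = `|z|%N :> int.
  by rewrite gez0_abs // ceil_ge0 (lt_le_trans (ltrN10 _)) ?mulr_ge0.
exists `|z|%N; split => //.
  by have := ceil_ge (p * n%:R); rewrite -/z {1}z_nat.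
by rewrite -lez_nat -z_nat ceil_le_int ler_piMl.
Qed.

Lemma natr_le_powR_inv (R : realType) b m k : (0 < k)%N -> (b ^ k <= m)%N ->
  b%:R <= m%:R `^ k%:R^-1 :> R.
Proof.
move=> k_gt0 le_bk_m; have k_neq0 : k%:R != 0 :> R by rewrite pnatr_eq0 -lt0n.
have -> : b%:R = (b%:R `^ k%:R) `^ k%:R^-1 :> R.
  by rewrite -powRrM mulfV // powRr1.
rewrite powR_mulrn // -natrX.
by apply: ge0_ler_powR; rewrite ?invr_ge0 ?nnegrE ?ler_nat.
Qed.

Unset Implicit Arguments.
Set Strict Implicit.

Theorem proposition6 (R : realType) (n : nat) (D : {ffun 'S_n -> R})
    (p : R) (k : nat) (i : 'I_n) :
  (forall s, 0 <= D s) -> \sum_(s : 'S_n) D s = 1 ->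
  0 <= p <= 1 -> (0 < k)%N ->
  exists A : algo n,
    (forall s : 'S_n, (num_queries A k s)%:R <=
        k%:R * @powR R ((Num.ceil (p * n%:R))%:~R) (k%:R^-1)) /\
    p <= \sum_(s : 'S_n | result A k s == rank s i) D s.
Proof.
move=> D_ge0 D_sum p01 k_gt0.
have n_gt0 : (0 < n)%N := leq_ltn_trans (leq0n i) (ltn_ord i).
have [m [-> le_pn_m le_mn]] := ceil_mulr_nat n p01.
have [b /andP[le_bk_m lt_m_bk]] := exists_iroot m k_gt0.
pose marginal (v : 'I_n) := \sum_(s : 'S_n | s i == v) D s.
have [|S [card_S heavy_S]] := exists_heavy_subset marginal (m := m).
  by rewrite card_ord.
exists (locate_algo i S b k); split => [s|].
  rewrite num_queries_search_algo natrM ler_wpM2l //.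
  exact: natr_le_powR_inv.
have p_le_S : p <= \sum_(v in S) marginal v.
  rewrite sum_fibers_in /= D_sum mulr1 card_ord in heavy_S.
  rewrite -(ler_pM2l (_ : 0 < n%:R)) ?ltr0n // mulrC.
  exact: le_trans le_pn_m heavy_S.
apply: (le_trans p_le_S); rewrite sum_fibers_in.
apply: ler_sum_subpred => // s si_S.
by rewrite locate_algo_correct ?card_S.
Qed.
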